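(* Let $a$ and $c$ be coprime positive integers with $a+c$ odd. Then for every integer $p\geq1$ and all $x,z\in\mathbb{R}$, $$ac^{p}S_{p}(a,c:x,z)+ca^{p}S_{p}(c,a:z,x)=\sum_{j=1}^{p}\binom{p-1}{j-1}a^{p+1-j}c^{j}\mathcal{E}_{p-j}(z)\mathcal{E}_{j-1}(x).$$
   Context: $E_n(x)$ denotes the $n$th Euler polynomial, defined by $\frac{2e^{xt}}{e^t+1}=\sum_{n\ge0}E_n(x)\frac{t^n}{n!}$. The $n$th Euler function $\mathcal{E}_n$ ($n\ge0$) is defined by $\mathcal{E}_n(x)=E_n(x)$ for $0\le x<1$ and $\mathcal{E}_n(x+m)=(-1)^m\mathcal{E}_n(x)$ for $m\in\mathbb{Z}$. For a positive integer $a$, a positive integer $c$, an integer $p\ge1$ and real $x,z$, define $$S_{p}(a,c:x,z)=\sum_{\mu=0}^{c-1}(-1)^{\mu}\mathcal{E}_{p-1}\Big(a\frac{\mu+z}{c}+x\Big)\mathcal{E}_{0}\Big(\frac{\mu+z}{c}\Big).$$ *)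

From Stdlib Require Import Reals Lra Lia List.
Open Scope R_scope.

(* The generating function
     2 e^{xt} / (e^t + 1) = sum_n E_n(x) t^n / n!
   is equivalent (multiply by e^t + 1 and compare coefficients of t^n/n!) to
     E_n(x) + sum_{k=0}^{n} C(n,k) E_k(x) = 2 x^n,
   i.e. E_0(x) = 1 and E_n(x) = x^n - 1/2 sum_{k=0}^{n-1} C(n,k) E_k(x).
   [euler_list n] is the list [E_0; ...; E_n]. *)
Fixpoint euler_list (n : nat) : list (R -> R) :=
  match n with
  | O => (fun _ => 1) :: nil
  | S m =>
      let l := euler_list m in
      l ++ ((fun x => x ^ (S m)
               - / 2 * sum_f_R0 (fun k => Binomial.C (S m) k * nth k l (fun _ => 0) x) m)
            :: nil)
  end.

Definition euler_poly (n : nat) (x : R) : R := nth n (euler_list n) (fun _ => 0) x.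

Definition euler_fun (n : nat) (x : R) : R :=
  powerRZ (-1) (Int_part x) * euler_poly n (x - IZR (Int_part x)).

Definition S_sum (p a c : nat) (x z : R) : R :=
  sum_f_R0 (fun mu =>
     (-1) ^ mu
     * euler_fun (p - 1) (INR a * (INR mu + z) / INR c + x)
     * euler_fun 0 ((INR mu + z) / INR c)) (c - 1).

From Stdlib Require Import Reals Arith Lra Lia List ZArith.
Open Scope R_scope.

(* Write n = p - 1 and M = a z + c x.  For 0 <= z < 1 the factors E_0((mu+z)/c)
   of S_p(a,c:x,z) are all 1, so c^n S_p(a,c:x,z) is the alternating sum
   H_{a,c}(M) = c^n sum_{mu<c} (-1)^mu E_n((a mu + M)/c) of Euler functions, and
   likewise a^n S_p(c,a:z,x) = H_{c,a}(M) for 0 <= x < 1.  By the addition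
   formula of Euler polynomials, the right-hand side equals a c Phi(M) for a
   function Phi of M alone, symmetric in a and c.  The defect
   D = H_{a,c} + H_{c,a} - Phi satisfies D(M + a) = - D(M) on [0, c) and
   D(M + c) = - D(M) on [0, a): shifting by a telescopes the alternating sum in
   H_{a,c}, leaving 2 c^n E_n(M/c), which is also Phi(M) + Phi(M + a), while
   H_{c,a} is a-antiperiodic.  Following the integer part of M along the
   rotation k -> k + a mod (a + c), which closes up after a + c steps, the sign
   of D flips an odd number of times, so D = 0 on [0, a + c).  This is the
   identity for x, z in [0, 1); both sides are antiperiodic in x and in z. *)

Local Notation E := euler_poly.

Lemma sum_f_R0_opp (f : nat -> R) n : sum_f_R0 (fun k => - f k) n = - sum_f_R0 f n.
Proof. induction n as [|n IH]; simpl; [|rewrite IH]; ring. Qed.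

Lemma sum_f_R0_rev (f : nat -> R) n : sum_f_R0 f n = sum_f_R0 (fun k => f (n - k)%nat) n.
Proof.
  induction n as [|n IH]; [reflexivity|].
  rewrite (decomp_sum (fun k => f (S n - k)%nat) (S n)) by lia.
  simpl pred. rewrite tech5, IH, Nat.sub_0_r. simpl. ring.
Qed.

Lemma sum_f_R0_alt_telescope (g : nat -> R) m :
  sum_f_R0 (fun i => (-1) ^ i * g (S i)) m + sum_f_R0 (fun i => (-1) ^ i * g i) m
  = g 0%nat - (-1) ^ S m * g (S m).
Proof.
  induction m as [|m IH]; [simpl; ring|].
  rewrite !tech5.
  transitivity (sum_f_R0 (fun i => (-1) ^ i * g (S i)) m
                + sum_f_R0 (fun i => (-1) ^ i * g i) m
                + (-1) ^ S m * (g (S (S m)) + g (S m))); [ring|].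
  rewrite IH. simpl. ring.
Qed.

Lemma sum_f_R0_triangle_swap (F : nat -> nat -> R) n :
  sum_f_R0 (fun k => sum_f_R0 (fun l => F k l) k) n
  = sum_f_R0 (fun l => sum_f_R0 (fun j => F (l + j)%nat l) (n - l)) n.
Proof.
  induction n as [|n IH]; [reflexivity|].
  rewrite tech5, IH, (tech5 (fun l => sum_f_R0 _ (S n - l))), (tech5 (fun l => F (S n) l) n).
  rewrite Nat.sub_diag. simpl (sum_f_R0 _ 0). rewrite Nat.add_0_r.
  rewrite (sum_eq (fun l => sum_f_R0 (fun j => F (l + j)%nat l) (S n - l))
             (fun l => sum_f_R0 (fun j => F (l + j)%nat l) (n - l) + F (S n) l)).
  - rewrite plus_sum. change (fun l : nat => F (S n) l) with (F (S n)). ring.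
  - intros l Hl. replace (S n - l)%nat with (S (n - l)) by lia.
    rewrite tech5. replace (l + S (n - l))%nat with (S n) by lia. reflexivity.
Qed.

Lemma neg1_pow_odd n : Nat.odd n = true -> (-1) ^ n = -1.
Proof.
  intros Hn. apply Nat.odd_spec in Hn as [q ->].
  rewrite Nat.add_1_r. apply pow_1_odd.
Qed.

Lemma neg1_pow_sqr n : (-1) ^ n * (-1) ^ n = 1.
Proof. rewrite <- pow_add, <- pow_1_even with n. f_equal. lia. Qed.

Lemma sum_f_R0_alt_shift_odd (g : nat -> R) a c :
  (0 < c)%nat -> Nat.odd (a + c) = true ->
  sum_f_R0 (fun i => (-1) ^ i * g (S i)) (c - 1)
  + sum_f_R0 (fun i => (-1) ^ i * g i) (c - 1)
  = g 0%nat + (-1) ^ a * g c.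
Proof.
  intros Hc Hodd. rewrite sum_f_R0_alt_telescope.
  replace (S (c - 1)) with c by lia.
  assert (Hac : (-1) ^ a * (-1) ^ c = -1) by (rewrite <- pow_add; apply neg1_pow_odd, Hodd).
  pose proof (neg1_pow_sqr a).
  replace ((-1) ^ c) with (- (-1) ^ a) by nra. ring.
Qed.

Definition binom_conv (A B : nat -> R) (n : nat) : R :=
  sum_f_R0 (fun k => C n k * A k * B (n - k)%nat) n.

Lemma binom_conv_ext A A' B B' n :
  (forall k, (k <= n)%nat -> A k = A' k) -> (forall k, (k <= n)%nat -> B k = B' k) ->
  binom_conv A B n = binom_conv A' B' n.
Proof.
  intros HA HB. apply sum_eq. intros k Hk. rewrite HA, HB by lia. reflexivity.
Qed.

Lemma binom_conv_comm A B n : binom_conv A B n = binom_conv B A n.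
Proof.
  unfold binom_conv. rewrite sum_f_R0_rev. apply sum_eq. intros k Hk.
  rewrite <- pascal_step1 by lia. replace (n - (n - k))%nat with k by lia. ring.
Qed.

Lemma C_mul_C n l j : (l + j <= n)%nat ->
  C n (l + j) * C (l + j) l = C n l * C (n - l) j.
Proof.
  intros H. unfold C.
  replace (l + j - l)%nat with j by lia.
  replace (n - (l + j))%nat with (n - l - j)%nat by lia.
  pose proof (INR_fact_neq_0 l). pose proof (INR_fact_neq_0 j).
  pose proof (INR_fact_neq_0 (l + j)). pose proof (INR_fact_neq_0 (n - l)).
  pose proof (INR_fact_neq_0 (n - l - j)).
  field. auto.
Qed.

Lemma binom_conv_assoc A B D n :
  binom_conv (binom_conv A B) D n = binom_conv A (binom_conv B D) n.
Proof.
  unfold binom_conv.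
  rewrite (sum_eq _ (fun k => sum_f_R0 (fun l =>
             C n k * C k l * A l * B (k - l)%nat * D (n - k)%nat) k)).
  2:{ intros k Hk. rewrite scal_sum, <- (Rmult_comm (D _)), scal_sum.
      apply sum_eq. intros; ring. }
  rewrite sum_f_R0_triangle_swap. apply sum_eq. intros l Hl.
  rewrite scal_sum. apply sum_eq. intros j Hj.
  replace (l + j - l)%nat with j by lia.
  replace (n - (l + j))%nat with (n - l - j)%nat by lia.
  rewrite (C_mul_C n l j) by lia. ring.
Qed.

Lemma binom_conv_plus_r A B B' n :
  binom_conv A B n + binom_conv A B' n = binom_conv A (fun k => B k + B' k) n.
Proof. unfold binom_conv. rewrite <- plus_sum. apply sum_eq. intros; ring. Qed.

Lemma binom_conv_scal_r A B s n :
  binom_conv A (fun k => s * B k) n = s * binom_conv A B n.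
Proof. unfold binom_conv. rewrite scal_sum. apply sum_eq. intros; ring. Qed.

Lemma euler_list_length n : length (euler_list n) = S n.
Proof.
  induction n as [|n IH]; [reflexivity|].
  simpl. rewrite length_app, IH. simpl. lia.
Qed.

Lemma euler_list_nth m k : (k <= m)%nat ->
  nth k (euler_list m) (fun _ => 0) = nth k (euler_list k) (fun _ => 0).
Proof.
  induction m as [|m IH]; intros Hk.
  - replace k with 0%nat by lia. reflexivity.
  - destruct (Nat.eq_dec k (S m)) as [->|Hne]; [reflexivity|].
    simpl. rewrite app_nth1 by (rewrite euler_list_length; lia). apply IH. lia.
Qed.

Lemma euler_poly_S m x :
  E (S m) x = x ^ S m - / 2 * sum_f_R0 (fun k => C (S m) k * E k x) m.
Proof.
  unfold euler_poly at 1. simpl.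
  rewrite app_nth2 by (rewrite euler_list_length; lia).
  rewrite euler_list_length, Nat.sub_diag. simpl.
  do 2 f_equal. apply sum_eq. intros k Hk. unfold euler_poly.
  rewrite euler_list_nth by lia. reflexivity.
Qed.

Lemma euler_poly_0 x : E 0 x = 1.
Proof. reflexivity. Qed.

Lemma C_diag n : C n n = 1.
Proof. unfold C. rewrite Nat.sub_diag. simpl. field. apply INR_fact_neq_0. Qed.

Lemma euler_poly_rec n x : E n x + sum_f_R0 (fun k => C n k * E k x) n = 2 * x ^ n.
Proof.
  destruct n as [|n].
  - simpl. rewrite C_diag, euler_poly_0. lra.
  - rewrite tech5, C_diag, euler_poly_S. lra.
Qed.

Lemma euler_poly_unique (P : nat -> R) x :
  (forall n, P n + sum_f_R0 (fun k => C n k * P k) n = 2 * x ^ n) ->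
  forall n, P n = E n x.
Proof.
  intros HP n. induction n as [n IH] using lt_wf_ind.
  pose proof (HP n) as HPn. pose proof (euler_poly_rec n x) as HEn.
  destruct n as [|m].
  - simpl in HPn, HEn. rewrite C_diag in HPn, HEn. lra.
  - rewrite tech5, C_diag in HPn, HEn.
    rewrite (sum_eq (fun k => C (S m) k * P k) (fun k => C (S m) k * E k x)) in HPn
      by (intros k Hk; rewrite IH by lia; reflexivity).
    lra.
Qed.

Lemma euler_poly_appell n x : E n x = binom_conv (fun k => E k 0) (pow x) n.
Proof.
  symmetry. revert n. apply euler_poly_unique. intros n.
  set (e := fun k => E k 0).
  assert (He : forall m, binom_conv e (fun _ => 1) m = 2 * 0 ^ m - e m).
  { intros m. pose proof (euler_poly_rec m 0) as H. unfold binom_conv.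
    rewrite (sum_eq _ (fun k => C m k * E k 0)) by (intros; unfold e; ring).
    unfold e. lra. }
  transitivity (binom_conv e (pow x) n
                + binom_conv (binom_conv e (pow x)) (fun _ => 1) n).
  { f_equal. apply sum_eq. intros; ring. }
  rewrite binom_conv_assoc,
    (binom_conv_ext e e (binom_conv (pow x) _) (binom_conv (fun _ => 1) (pow x)))
    by (auto; intros; apply binom_conv_comm).
  rewrite <- binom_conv_assoc,
    (binom_conv_ext (binom_conv e (fun _ => 1)) (fun m => 2 * 0 ^ m - e m) (pow x) (pow x))
    by (intros; auto).
  assert (Hsplit : binom_conv (fun m => 2 * 0 ^ m - e m) (pow x) n
                   = 2 * (0 + x) ^ n - binom_conv e (pow x) n).
  { rewrite binomial. unfold binom_conv.
    rewrite scal_sum, <- minus_sum. apply sum_eq. intros; ring. }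
  rewrite Hsplit, Rplus_0_l. ring.
Qed.

Lemma euler_poly_add n x v : E n (x + v) = binom_conv (fun k => E k x) (pow v) n.
Proof.
  rewrite euler_poly_appell,
    (binom_conv_ext _ (fun k => E k 0) _ (binom_conv (pow x) (pow v)))
    by (intros; first [reflexivity | apply binomial]).
  rewrite <- binom_conv_assoc. apply binom_conv_ext; auto.
  intros k _. symmetry. apply euler_poly_appell.
Qed.

Lemma euler_poly_add1 n y : E n y + E n (y + 1) = 2 * y ^ n.
Proof.
  rewrite euler_poly_add, <- (euler_poly_rec n y). f_equal.
  apply sum_eq. intros. rewrite pow1. ring.
Qed.

Lemma euler_poly_scale a n z u : a <> 0 ->
  a ^ n * E n (z + u / a) = binom_conv (fun i => a ^ i * E i z) (pow u) n.
Proof.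
  intros Ha. rewrite euler_poly_add. unfold binom_conv. rewrite scal_sum.
  apply sum_eq. intros k Hk.
  replace (a ^ n) with (a ^ k * a ^ (n - k)) by (rewrite <- pow_add; f_equal; lia).
  unfold Rdiv. rewrite Rpow_mult_distr, pow_inv.
  field. apply pow_nonzero, Ha.
Qed.

Lemma Rdiv_unit_interval u c : 0 < c -> 0 <= u < c -> 0 <= u / c < 1.
Proof.
  intros Hc Hu. split.
  - apply Rmult_le_pos; [lra|]. left. apply Rinv_0_lt_compat, Hc.
  - apply (Rmult_lt_reg_r c); [exact Hc|].
    unfold Rdiv. rewrite Rmult_assoc, Rinv_l by lra. lra.
Qed.

Lemma IZR_split_INR k : IZR k = INR (Z.to_nat k) - INR (Z.to_nat (- k)).
Proof. rewrite !INR_IZR_INZ, <- minus_IZR. f_equal. lia. Qed.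

Lemma Int_part_add1 r : Int_part (r + 1) = (Int_part r + 1)%Z.
Proof.
  symmetry. apply Int_part_spec. destruct (base_Int_part r).
  rewrite plus_IZR. lra.
Qed.

Lemma Int_part_unit r : 0 <= r < 1 -> Int_part r = 0%Z.
Proof. intros Hr. symmetry. apply Int_part_spec. simpl. lra. Qed.

Lemma nonneg_Int_part_INR r : 0 <= r -> IZR (Int_part r) = INR (Z.to_nat (Int_part r)).
Proof.
  intros Hr. destruct (base_Int_part r) as [_ Hlow].
  assert (Hk : (0 <= Int_part r)%Z).
  { apply Z.lt_pred_le, lt_IZR. simpl. lra. }
  rewrite INR_IZR_INZ, Z2Nat.id by exact Hk. reflexivity.
Qed.

Section Antiperiodic.

Variable phi : R -> R.
Hypothesis phi_add1 : forall y, phi (y + 1) = - phi y.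

Lemma antiperiodic_add_INR y m : phi (y + INR m) = (-1) ^ m * phi y.
Proof.
  induction m as [|m IH].
  - simpl. rewrite Rplus_0_r. ring.
  - rewrite S_INR, <- Rplus_assoc, phi_add1, IH. simpl. ring.
Qed.

Lemma antiperiodic_zero : (forall y, 0 <= y < 1 -> phi y = 0) -> forall y, phi y = 0.
Proof.
  intros Hunit y.
  pose proof (Rplus_Int_part_frac_part y) as Hy. rewrite IZR_split_INR in Hy.
  set (f := frac_part y) in Hy.
  set (m := Z.to_nat (Int_part y)) in Hy. set (m' := Z.to_nat (- Int_part y)) in Hy.
  assert (Hf : phi f = 0) by (apply Hunit; unfold f; destruct (base_fp y); lra).
  assert (Hshift : phi (f - INR m') = 0).
  { pose proof (antiperiodic_add_INR (f - INR m') m') as H.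
    replace (f - INR m' + INR m') with f in H by ring.
    rewrite Hf in H. symmetry in H. apply Rmult_integral in H as [H|H]; [|exact H].
    exfalso. revert H. apply pow_nonzero. lra. }
  replace y with (f - INR m' + INR m) by lra.
  rewrite antiperiodic_add_INR, Hshift. ring.
Qed.

End Antiperiodic.

Lemma euler_fun_add1 n y : euler_fun n (y + 1) = - euler_fun n y.
Proof.
  unfold euler_fun. rewrite Int_part_add1, powerRZ_add by lra.
  replace (y + 1 - IZR (Int_part y + 1)) with (y - IZR (Int_part y))
    by (rewrite plus_IZR; ring).
  simpl. ring.
Qed.

Lemma euler_fun_unit n y : 0 <= y < 1 -> euler_fun n y = E n y.
Proof.
  intros Hy. unfold euler_fun. rewrite Int_part_unit by exact Hy.
  simpl. rewrite Rminus_0_r. ring.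
Qed.

Lemma euler_fun_add_INR n y m : euler_fun n (y + INR m) = (-1) ^ m * euler_fun n y.
Proof. apply antiperiodic_add_INR, euler_fun_add1. Qed.

Section EulerBisum.

Variables a c : R.
Hypotheses (a_neq0 : a <> 0) (c_neq0 : c <> 0).

Definition euler_bisum n x z :=
  binom_conv (fun i => c ^ i * E i x) (fun j => a ^ j * E j z) n.

Lemma euler_bisum_transfer n x z u :
  euler_bisum n (x + u / c) z = euler_bisum n x (z + u / a).
Proof.
  unfold euler_bisum.
  rewrite (binom_conv_ext _ (binom_conv (fun i => c ^ i * E i x) (pow u))
                          _ (fun j => a ^ j * E j z))
    by (intros; first [apply euler_poly_scale, c_neq0 | reflexivity]).
  rewrite binom_conv_assoc. apply binom_conv_ext; [reflexivity|]. intros k _.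
  rewrite binom_conv_comm. symmetry. apply euler_poly_scale, a_neq0.
Qed.

Lemma euler_bisum_add1 n x z :
  euler_bisum n x z + euler_bisum n x (z + 1) = 2 * (c ^ n * E n (x + a * z / c)).
Proof.
  unfold euler_bisum. rewrite binom_conv_plus_r.
  rewrite (binom_conv_ext _ (fun i => c ^ i * E i x) _ (fun k => 2 * (a * z) ^ k))
    by (intros; first [ reflexivity
                      | rewrite Rpow_mult_distr, <- Rmult_plus_distr_l, euler_poly_add1; ring ]).
  rewrite binom_conv_scal_r. f_equal. symmetry. apply euler_poly_scale, c_neq0.
Qed.

(* [euler_bisum n x z] depends on [x] and [z] only through [M = a z + c x]
   ([euler_bisum_level] below); this is its value as a function of [M]. *)
Definition euler_bisum_at n M := euler_bisum n 0 (M / a).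

Lemma euler_bisum_level n x z : euler_bisum n x z = euler_bisum_at n (a * z + c * x).
Proof.
  unfold euler_bisum_at.
  replace x with (0 + c * x / c) at 1 by (field; exact c_neq0).
  rewrite euler_bisum_transfer. f_equal. field. exact a_neq0.
Qed.

Lemma euler_bisum_at_add n M :
  euler_bisum_at n M + euler_bisum_at n (M + a) = 2 * (c ^ n * E n (M / c)).
Proof.
  unfold euler_bisum_at.
  replace ((M + a) / a) with (M / a + 1) by (field; exact a_neq0).
  rewrite euler_bisum_add1. do 3 f_equal. field. auto.
Qed.

End EulerBisum.

Lemma euler_bisum_comm a c n x z : euler_bisum a c n x z = euler_bisum c a n z x.
Proof. apply binom_conv_comm. Qed.

Lemma euler_bisum_at_comm a c n M : a <> 0 -> c <> 0 ->
  euler_bisum_at a c n M = euler_bisum_at c a n M.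
Proof.
  intros Ha Hc. unfold euler_bisum_at at 1.
  rewrite euler_bisum_comm, (euler_bisum_level c a) by assumption.
  f_equal. field. auto.
Qed.

Definition alt_euler_sum (a c n : nat) (M : R) : R :=
  INR c ^ n
  * sum_f_R0 (fun mu => (-1) ^ mu * euler_fun n ((INR a * INR mu + M) / INR c)) (c - 1).

Lemma alt_euler_sum_add_den a c n M : (0 < c)%nat ->
  alt_euler_sum a c n (M + INR c) = - alt_euler_sum a c n M.
Proof.
  intros Hc. unfold alt_euler_sum.
  rewrite Ropp_mult_distr_r, <- sum_f_R0_opp. f_equal. apply sum_eq. intros mu _.
  replace ((INR a * INR mu + (M + INR c)) / INR c)
    with ((INR a * INR mu + M) / INR c + 1) by (field; apply not_0_INR; lia).
  rewrite euler_fun_add1. ring.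
Qed.

Lemma alt_euler_sum_add_num a c n M : (0 < c)%nat -> Nat.odd (a + c) = true ->
  alt_euler_sum a c n M + alt_euler_sum a c n (M + INR a)
  = 2 * (INR c ^ n * euler_fun n (M / INR c)).
Proof.
  intros Hc Hodd. unfold alt_euler_sum.
  assert (Hc0 : INR c <> 0) by (apply not_0_INR; lia).
  set (g := fun mu => euler_fun n ((INR a * INR mu + M) / INR c)).
  assert (Hshift : sum_f_R0 (fun mu => (-1) ^ mu
                      * euler_fun n ((INR a * INR mu + (M + INR a)) / INR c)) (c - 1)
                   = sum_f_R0 (fun i => (-1) ^ i * g (S i)) (c - 1)).
  { apply sum_eq. intros i _. unfold g. rewrite S_INR. do 2 f_equal. field. exact Hc0. }
  rewrite Hshift.
  rewrite <- Rmult_plus_distr_l, Rplus_comm.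
  change (sum_f_R0 ?s (c - 1)) with (sum_f_R0 (fun i => (-1) ^ i * g i) (c - 1)) at 2.
  rewrite (sum_f_R0_alt_shift_odd g a c Hc Hodd).
  assert (Hg0 : g 0%nat = euler_fun n (M / INR c))
    by (unfold g; f_equal; simpl; field; exact Hc0).
  assert (Hgc : g c = (-1) ^ a * g 0%nat).
  { unfold g. rewrite <- euler_fun_add_INR. f_equal. simpl. field. exact Hc0. }
  rewrite Hgc, <- Rmult_assoc, neg1_pow_sqr, Hg0. ring.
Qed.

Definition defect (a c n : nat) (M : R) : R :=
  alt_euler_sum a c n M + alt_euler_sum c a n M - euler_bisum_at (INR a) (INR c) n M.

Lemma defect_comm a c n M : (0 < a)%nat -> (0 < c)%nat -> defect a c n M = defect c a n M.
Proof.
  intros Ha Hc. unfold defect.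
  rewrite euler_bisum_at_comm by (apply not_0_INR; lia). ring.
Qed.

Lemma defect_add_num a c n M : (0 < a)%nat -> (0 < c)%nat -> Nat.odd (a + c) = true ->
  0 <= M < INR c -> defect a c n (M + INR a) = - defect a c n M.
Proof.
  intros Ha Hc Hodd HM. unfold defect.
  pose proof (alt_euler_sum_add_num a c n M Hc Hodd) as Hac.
  pose proof (alt_euler_sum_add_den c a n M Ha) as Hca.
  pose proof (euler_bisum_at_add (INR a) (INR c)
                ltac:(apply not_0_INR; lia) ltac:(apply not_0_INR; lia) n M) as Hbi.
  rewrite euler_fun_unit in Hac by (apply Rdiv_unit_interval; [apply lt_0_INR|]; assumption).
  lra.
Qed.

Lemma defect_add_den a c n M : (0 < a)%nat -> (0 < c)%nat -> Nat.odd (a + c) = true ->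
  0 <= M < INR a -> defect a c n (M + INR c) = - defect a c n M.
Proof.
  intros Ha Hc Hodd HM. rewrite !(defect_comm a c) by assumption.
  apply defect_add_num; [assumption..| |assumption]. rewrite Nat.add_comm. exact Hodd.
Qed.

(* [f] changes sign at each step of the rotation [k -> (k + a) mod (a + c)],
   which returns to [k] after the odd number [a + c] of steps. *)
Lemma rotation_sign_flip_zero (f : nat -> R) a c : Nat.odd (a + c) = true ->
  (forall k, (k < c)%nat -> f (k + a)%nat = - f k) ->
  (forall k, (k < a)%nat -> f (k + c)%nat = - f k) ->
  forall k, (k < a + c)%nat -> f k = 0.
Proof.
  intros Hodd Hfa Hfc.
  set (N := (a + c)%nat).
  assert (HN : N <> 0%nat) by (unfold N; intros H0; rewrite H0 in Hodd; discriminate).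
  assert (Hstep : forall j, (j < N)%nat -> f ((j + a) mod N) = - f j).
  { intros j Hj. destruct (Nat.lt_ge_cases j c) as [Hjc|Hjc].
    - rewrite Nat.mod_small by (unfold N; lia). auto.
    - replace (j + a)%nat with ((j - c) + 1 * N)%nat by (unfold N; lia).
      rewrite Nat.Div0.mod_add, Nat.mod_small by (unfold N in *; lia).
      specialize (Hfc (j - c)%nat ltac:(unfold N in Hj; lia)).
      replace (j - c + c)%nat with j in Hfc by lia. lra. }
  assert (Hiter : forall m k, (k < N)%nat -> f ((k + m * a) mod N) = (-1) ^ m * f k).
  { induction m as [|m IH]; intros k Hk.
    - rewrite Nat.mul_0_l, Nat.add_0_r, Nat.mod_small by exact Hk. ring.
    - replace (k + S m * a)%nat with (k + m * a + a)%nat by lia.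
      rewrite <- Nat.Div0.add_mod_idemp_l, Hstep, IH
        by (try apply Nat.mod_upper_bound; assumption).
      simpl. ring. }
  intros k Hk. pose proof (Hiter N k Hk) as H.
  rewrite Nat.mul_comm, Nat.Div0.mod_add, Nat.mod_small, neg1_pow_odd in H by assumption.
  lra.
Qed.

Lemma defect_zero a c n M : (0 < a)%nat -> (0 < c)%nat -> Nat.odd (a + c) = true ->
  0 <= M < INR a + INR c -> defect a c n M = 0.
Proof.
  intros Ha Hc Hodd HM.
  set (m := frac_part M). set (k := Z.to_nat (Int_part M)).
  assert (Hm : 0 <= m < 1) by (unfold m; destruct (base_fp M); lra).
  assert (HMk : M = m + INR k).
  { unfold m, k. rewrite <- nonneg_Int_part_INR by lra.
    rewrite (Rplus_Int_part_frac_part M) at 1. ring. }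
  assert (Hk : (k < a + c)%nat).
  { apply INR_lt. rewrite plus_INR. lra. }
  rewrite HMk.
  apply (rotation_sign_flip_zero (fun j => defect a c n (m + INR j)) a c Hodd); [..|exact Hk].
  - intros j Hj. rewrite plus_INR, <- Rplus_assoc. apply defect_add_num; try assumption.
    assert (INR j + 1 <= INR c) by (rewrite <- S_INR; apply le_INR, Hj).
    pose proof (pos_INR j). lra.
  - intros j Hj. rewrite plus_INR, <- Rplus_assoc. apply defect_add_den; try assumption.
    assert (INR j + 1 <= INR a) by (rewrite <- S_INR; apply le_INR, Hj).
    pose proof (pos_INR j). lra.
Qed.

Lemma S_sum_alt_euler_sum a c n x z : (0 < c)%nat -> 0 <= z < 1 ->
  INR c ^ n * S_sum (S n) a c x z = alt_euler_sum a c n (INR a * z + INR c * x).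
Proof.
  intros Hc Hz. unfold S_sum, alt_euler_sum. rewrite Nat.sub_succ, Nat.sub_0_r.
  f_equal. apply sum_eq. intros mu Hmu.
  assert (HcR : 0 < INR c) by (apply lt_0_INR, Hc).
  assert (Hmu1 : INR mu + 1 <= INR c) by (rewrite <- S_INR; apply le_INR; lia).
  rewrite (euler_fun_unit 0)
    by (apply Rdiv_unit_interval; [exact HcR | pose proof (pos_INR mu); lra]).
  rewrite euler_poly_0, Rmult_1_r.
  do 2 f_equal. field. lra.
Qed.

Lemma S_sum_add1_x p a c x z : S_sum p a c (x + 1) z = - S_sum p a c x z.
Proof.
  unfold S_sum. rewrite <- sum_f_R0_opp. apply sum_eq. intros mu _.
  rewrite <- Rplus_assoc, euler_fun_add1. ring.
Qed.

Lemma S_sum_add1_z p a c x z : (0 < c)%nat -> Nat.odd (a + c) = true ->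
  S_sum p a c x (z + 1) = - S_sum p a c x z.
Proof.
  intros Hc Hodd. unfold S_sum.
  assert (Hc0 : INR c <> 0) by (apply not_0_INR; lia).
  set (g := fun mu => euler_fun (p - 1) (INR a * (INR mu + z) / INR c + x)
                      * euler_fun 0 ((INR mu + z) / INR c)).
  assert (Hshift : sum_f_R0 (fun mu => (-1) ^ mu
             * euler_fun (p - 1) (INR a * (INR mu + (z + 1)) / INR c + x)
             * euler_fun 0 ((INR mu + (z + 1)) / INR c)) (c - 1)
           = sum_f_R0 (fun i => (-1) ^ i * g (S i)) (c - 1)).
  { apply sum_eq. intros i _. unfold g.
    replace (INR i + (z + 1)) with (INR (S i) + z) by (rewrite S_INR; ring). ring. }
  assert (Hsame : sum_f_R0 (fun mu => (-1) ^ mu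
             * euler_fun (p - 1) (INR a * (INR mu + z) / INR c + x)
             * euler_fun 0 ((INR mu + z) / INR c)) (c - 1)
           = sum_f_R0 (fun i => (-1) ^ i * g i) (c - 1)).
  { apply sum_eq. intros i _. unfold g. ring. }
  assert (Hgc : g c = - ((-1) ^ a * g 0%nat)).
  { unfold g. simpl INR.
    replace (INR a * (INR c + z) / INR c + x) with (INR a * (0 + z) / INR c + x + INR a)
      by (field; exact Hc0).
    replace ((INR c + z) / INR c) with ((0 + z) / INR c + 1) by (field; exact Hc0).
    rewrite euler_fun_add_INR, euler_fun_add1. ring. }
  pose proof (sum_f_R0_alt_shift_odd g a c Hc Hodd) as Hsum.
  rewrite Hgc, Ropp_mult_distr_r, <- Rmult_assoc, neg1_pow_sqr in Hsum.
  rewrite Hshift, Hsame. lra.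
Qed.

Definition S_reciprocity_lhs (a c p : nat) (x z : R) : R :=
  INR a * INR c ^ p * S_sum p a c x z + INR c * INR a ^ p * S_sum p c a z x.

Definition S_reciprocity_rhs (a c p : nat) (x z : R) : R :=
  sum_f_R0 (fun i => let j := S i in
       C (p - 1) (j - 1) * INR a ^ (p + 1 - j) * INR c ^ j
       * euler_fun (p - j) z * euler_fun (j - 1) x) (p - 1).

Lemma S_reciprocity_lhs_add1_x a c p x z : (0 < a)%nat -> Nat.odd (a + c) = true ->
  S_reciprocity_lhs a c p (x + 1) z = - S_reciprocity_lhs a c p x z.
Proof.
  intros Ha Hodd. unfold S_reciprocity_lhs.
  rewrite S_sum_add1_x, S_sum_add1_z by (try rewrite Nat.add_comm; assumption). ring.
Qed.

Lemma S_reciprocity_lhs_add1_z a c p x z : (0 < c)%nat -> Nat.odd (a + c) = true ->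
  S_reciprocity_lhs a c p x (z + 1) = - S_reciprocity_lhs a c p x z.
Proof.
  intros Hc Hodd. unfold S_reciprocity_lhs.
  rewrite S_sum_add1_x, S_sum_add1_z by assumption. ring.
Qed.

Lemma S_reciprocity_rhs_add1_x a c p x z :
  S_reciprocity_rhs a c p (x + 1) z = - S_reciprocity_rhs a c p x z.
Proof.
  unfold S_reciprocity_rhs. rewrite <- sum_f_R0_opp. apply sum_eq. intros i _.
  rewrite euler_fun_add1. ring.
Qed.

Lemma S_reciprocity_rhs_add1_z a c p x z :
  S_reciprocity_rhs a c p x (z + 1) = - S_reciprocity_rhs a c p x z.
Proof.
  unfold S_reciprocity_rhs. rewrite <- sum_f_R0_opp. apply sum_eq. intros i _.
  rewrite euler_fun_add1. ring.
Qed.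

Lemma S_reciprocity_rhs_bisum a c n x z : 0 <= x < 1 -> 0 <= z < 1 ->
  S_reciprocity_rhs a c (S n) x z = INR a * INR c * euler_bisum (INR a) (INR c) n x z.
Proof.
  intros Hx Hz. unfold S_reciprocity_rhs, euler_bisum, binom_conv.
  rewrite Nat.sub_succ, Nat.sub_0_r, scal_sum. apply sum_eq. intros i Hi. cbv zeta.
  rewrite !Nat.sub_succ, Nat.sub_0_r, !euler_fun_unit by assumption.
  replace (S n + 1 - S i)%nat with (S (n - i)) by lia.
  cbn [pow]. ring.
Qed.

Lemma S_reciprocity_unit_square a c n x z :
  (0 < a)%nat -> (0 < c)%nat -> Nat.odd (a + c) = true -> 0 <= x < 1 -> 0 <= z < 1 ->
  S_reciprocity_lhs a c (S n) x z = S_reciprocity_rhs a c (S n) x z.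
Proof.
  intros Ha Hc Hodd Hx Hz.
  set (M := INR a * z + INR c * x).
  assert (Hlhs : S_reciprocity_lhs a c (S n) x z
                 = INR a * INR c * (alt_euler_sum a c n M + alt_euler_sum c a n M)).
  { unfold S_reciprocity_lhs, M.
    rewrite <- (S_sum_alt_euler_sum a c n x z), (Rplus_comm (INR a * z)),
      <- (S_sum_alt_euler_sum c a n z x) by assumption.
    cbn [pow]. ring. }
  assert (HM : 0 <= M < INR a + INR c).
  { unfold M. pose proof (lt_0_INR a Ha). pose proof (lt_0_INR c Hc). split; nra. }
  pose proof (defect_zero a c n M Ha Hc Hodd HM) as Hdef. unfold defect in Hdef.
  rewrite Hlhs, S_reciprocity_rhs_bisum, euler_bisum_level
    by (try apply not_0_INR; try lia; assumption).
  fold M. f_equal. lra.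
Qed.

Theorem corollary1 (a c : nat) (ha : (0 < a)%nat) (hc : (0 < c)%nat)
  (hcop : Nat.gcd a c = 1%nat) (hodd : Nat.odd (a + c) = true)
  (p : nat) (hp : (1 <= p)%nat) (x z : R) :
  INR a * INR c ^ p * S_sum p a c x z + INR c * INR a ^ p * S_sum p c a z x
  = sum_f_R0 (fun i => let j := S i in
       Binomial.C (p - 1) (j - 1) * INR a ^ (p + 1 - j) * INR c ^ j
       * euler_fun (p - j) z * euler_fun (j - 1) x) (p - 1).
Proof.
  change (S_reciprocity_lhs a c p x z = S_reciprocity_rhs a c p x z).
  destruct p as [|n]; [lia|].
  set (d := fun u v => S_reciprocity_lhs a c (S n) u v - S_reciprocity_rhs a c (S n) u v).
  assert (Hd_x : forall u v, d (u + 1) v = - d u v).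
  { intros u v. unfold d.
    rewrite S_reciprocity_lhs_add1_x, S_reciprocity_rhs_add1_x by assumption. ring. }
  assert (Hd_z : forall u v, d u (v + 1) = - d u v).
  { intros u v. unfold d.
    rewrite S_reciprocity_lhs_add1_z, S_reciprocity_rhs_add1_z by assumption. ring. }
  assert (Hd_strip : forall v, 0 <= v < 1 -> forall u, d u v = 0).
  { intros v Hv. apply (antiperiodic_zero (fun u => d u v)); [intros; apply Hd_x|].
    intros u Hu. unfold d. rewrite S_reciprocity_unit_square by assumption. ring. }
  apply Rminus_diag_uniq. change (d x z = 0). revert z.
  apply (antiperiodic_zero (d x)); [apply Hd_z | intros z Hz; apply Hd_strip, Hz].
Qed.
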